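(* Let $G$ be a finite group of order $9$ (written additively), and let $A,B\subseteq G$. Then: (i) if $|A|=3$ and $A$ is zero-sum free, then $|\sum(A)|\ge 6$; (ii) if $|A|=3$ and $0\notin A$, then $|\sum(A)|\ge 5$; (iii) if $|A|=4$ and $0\notin A$, then $|\sum(A)|\ge 7$; (iv) if $|A|=4$, then $|\sum_2(A)|\ge 5$; (v) if $|A|=4$ and $|B|\ge 2$, then $|A+B|\ge 5$.
   Context: For a subset $A=\{a_1,\dots,a_k\}$ of $G$, $\sum(A)$ is the set of all sums $a_{i_1}+\cdots+a_{i_l}$ with $1\le l\le k$ and $i_1,\dots,i_l$ pairwise distinct; $\sum_r(A)$ is the set of all such sums with exactly $r$ pairwise distinct indices. $A$ is zero-sum free if $0\notin\sum(A)$. $A+B=\{a+b: a\in A, b\in B\}$. *)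

From HB Require Import structures.
From mathcomp Require Import all_boot all_order all_algebra.
Set Implicit Arguments. Unset Strict Implicit. Unset Printing Implicit Defensive.
Import GRing.Theory.
Local Open Scope ring_scope.

Definition subset_sums (G : finZmodType) (A : {set G}) : {set G} :=
  [set \sum_(x in S) x | S : {set G} in powerset A & S != set0].

Definition subset_sums_r (G : finZmodType) (r : nat) (A : {set G}) : {set G} :=
  [set \sum_(x in S) x | S : {set G} in powerset A & #|S| == r].

Definition zero_sum_free (G : finZmodType) (A : {set G}) : bool :=
  0 \notin subset_sums A.

Definition sumset (G : finZmodType) (A B : {set G}) : {set G} :=
  [set a + b | a in A, b in B].

From HB Require Import structures.
From mathcomp Require Import all_boot all_order all_algebra all_fingroup cyclic.
Set Implicit Arguments. Unset Strict Implicit. Unset Printing Implicit Defensive.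
Import GRing.Theory FinRing.Theory.
Local Open Scope ring_scope.

(* A group of order 9 is isomorphic to Z/9 or to (Z/3)^2: either some element has
   order 9, or every element has order dividing 3 and two elements g, h with
   h outside <g> form a basis.  All five quantities are invariant under additive
   bijections, so it suffices to verify the bounds in these two models, which is
   done exhaustively over all subsets of size 2, 3 and 4 by computation; the
   bound (v) reduces to |B| = 2 by monotonicity of A + B in B. *)

(* MathComp declares no finite Z-module structure on pairs. *)
HB.instance Definition _ (U V : finZmodType) := GRing.Zmodule.on (U * V)%type.

Fixpoint subseqs (T : Type) (s : seq T) : seq (seq T) :=
  if s is x :: s' then let r := subseqs s' in map (cons x) r ++ r else [:: [::]].

Lemma mem_subseqs (T : eqType) (s t : seq T) : subseq t s -> t \in subseqs s.
Proof.
elim: s t => [|x s IHs] [|y t] //=; rewrite ?inE // mem_cat.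
  by move=> _; rewrite IHs ?orbT ?sub0seq.
by case: eqP => [-> /IHs st | _ /IHs ->]; rewrite ?map_f ?orbT.
Qed.

Fixpoint sized_sums (T : zmodType) (P : pred nat) (s : seq T) : seq T :=
  if s is x :: s' then sized_sums P s' ++ map (+%R x) (sized_sums (P \o succn) s')
  else if P 0%N then [:: 0] else [::].

Section SubsetSums.
Variable G : finZmodType.
Implicit Types (P : pred nat) (A B : {set G}) (s : seq G).

Definition sized_subset_sums P A : {set G} :=
  [set \sum_(x in S) x | S : {set G} in powerset A & P #|S|].

Lemma subset_sumsE A : subset_sums A = sized_subset_sums (fun n => 0 < n)%N A.
Proof.
apply/setP => y; apply/imsetP/imsetP => -[S]; rewrite !inE ?card_gt0 => SA ->;
  by exists S; rewrite ?inE ?card_gt0.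
Qed.

Lemma subset_sums_rE r A : subset_sums_r r A = sized_subset_sums (pred1 r) A.
Proof. by []. Qed.

Lemma sized_subset_sums0 P :
  sized_subset_sums P set0 = if P 0%N then [set 0 : G] else set0.
Proof.
apply/setP => y; rewrite /sized_subset_sums powerset0; apply/imsetP/idP => [[S] | ].
  rewrite !inE => /andP [/eqP -> P0] ->.
  by move: P0; rewrite cards0 big_set0 => ->; rewrite inE.
case: ifP => P0; rewrite inE // => /eqP ->.
by exists set0; rewrite ?big_set0 ?inE ?cards0 ?P0 ?eqxx.
Qed.

Lemma sized_subset_sumsU1 P x A : x \notin A ->
  sized_subset_sums P (x |: A) =
  sized_subset_sums P A :|: [set x + y | y in sized_subset_sums (P \o succn) A].
Proof.
move=> xA; apply/setP => y; rewrite inE; apply/imsetP/orP.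
  case=> S; rewrite inE powersetE => /andP [sSxA PS] ->.
  have [xS | xS] := boolP (x \in S).
    right; apply/imsetP; exists (\sum_(z in S :\ x) z); last by rewrite (big_setD1 x xS).
    apply/imsetP; exists (S :\ x) => //.
    have cardS : #|S| = #|S :\ x|.+1 by rewrite (cardsD1 x S) xS.
    by rewrite inE powersetE subDset sSxA /= -cardS.
  left; apply/imsetP; exists S => //; rewrite inE powersetE PS andbT.
  apply/subsetP => z zS; move/subsetP/(_ z zS): sSxA; rewrite !inE.
  by case: eqP zS xS => [-> ->|].
case=> [|/imsetP [z]] /imsetP [S]; rewrite inE powersetE => /andP [sSA PS] ->.
  exists S => //; rewrite inE powersetE PS andbT.
  exact: subset_trans sSA (subsetU1 x A).
have xS : x \notin S by apply: contra xA; apply: (subsetP sSA).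
move=> ->; exists (x |: S); last by rewrite big_setU1.
by rewrite inE powersetE setUS // cardsU1 xS.
Qed.

Lemma card_set_seq (s : seq G) : #|[set:: s]| = size (undup s).
Proof. by rewrite cardsE -(eq_card (mem_undup s)); apply/card_uniqP/undup_uniq. Qed.

Lemma set_map (T : finType) (f : T -> G) (s : seq T) : [set:: map f s] = f @: [set:: s].
Proof.
apply/setP => y; rewrite inE; apply/mapP/imsetP => -[x xs ->]; exists x => //.
  by rewrite inE.
by rewrite inE in xs.
Qed.

Lemma sized_subset_sums_seq P s : uniq s ->
  sized_subset_sums P [set:: s] = [set:: sized_sums P s].
Proof.
elim: s P => [|x s IHs] P /=.
  move=> _; rewrite set_nil sized_subset_sums0.
  by case: (P 0%N); apply/setP => y; rewrite !inE.
case/andP => xs us; rewrite set_cons sized_subset_sumsU1 ?inE // !IHs //.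
by rewrite -set_map; apply/setP => y; rewrite !inE mem_cat.
Qed.

Lemma sumset_seq s t : sumset [set:: s] [set:: t] = [set:: [seq a + b | a <- s, b <- t]].
Proof.
apply/setP => y; rewrite inE; apply/imset2P/allpairsP => [[a b] | [[a b] /= [aS bT ->]]].
  by rewrite !inE => aS bT ->; exists (a, b).
by exists a b; rewrite ?inE.
Qed.
End SubsetSums.

Lemma sized_sums_map (U V : zmodType) (f : U -> V) P s :
  f 0 = 0 -> {morph f : x y / x + y} -> map f (sized_sums P s) = sized_sums P (map f s).
Proof.
move=> f0 fD; elim: s P => [|x s IHs] P /=; first by case: (P 0%N) => //=; rewrite f0.
by rewrite map_cat -!IHs -!map_comp; congr (_ ++ _); apply: eq_map => y /=; rewrite fD.
Qed.

Definition sum_bounds (G : finZmodType) : Prop :=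
  (forall A : {set G}, #|A| = 3%N -> zero_sum_free A -> (6 <= #|subset_sums A|)%N) /\
  (forall A : {set G}, #|A| = 3%N -> 0 \notin A -> (5 <= #|subset_sums A|)%N) /\
  (forall A : {set G}, #|A| = 4%N -> 0 \notin A -> (7 <= #|subset_sums A|)%N) /\
  (forall A : {set G}, #|A| = 4%N -> (5 <= #|subset_sums_r 2 A|)%N) /\
  (forall A B : {set G}, #|A| = 4%N -> (2 <= #|B|)%N -> (5 <= #|sumset A B|)%N).

Section Transfer.
Variables (T G : finZmodType) (phi : T -> G).
Hypotheses (phiD : {morph phi : x y / x + y}) (phi_inj : injective phi).
Hypothesis card_le : (#|G| <= #|T|)%N.

Let phi0 : phi 0 = 0.
Proof. by apply: (addrI (phi 0)); rewrite -phiD !addr0. Qed.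

Lemma sized_subset_sums_im P (A : {set T}) :
  sized_subset_sums P (phi @: A) = phi @: sized_subset_sums P A.
Proof.
rewrite -[A]set_enum -set_map !sized_subset_sums_seq ?map_inj_uniq ?enum_uniq //.
by rewrite -set_map sized_sums_map.
Qed.

Lemma sumset_im (A B : {set T}) : sumset (phi @: A) (phi @: B) = phi @: sumset A B.
Proof.
apply/setP => y; apply/imset2P/imsetP => [[_ _ /imsetP [a aA ->] /imsetP [b bB ->] ->] |].
  by exists (a + b); [apply/imset2P; exists a b | rewrite phiD].
by case=> _ /imset2P [a b aA bB ->] ->; exists (phi a) (phi b); rewrite ?imset_f ?phiD.
Qed.

Lemma im_preim (A : {set G}) : phi @: (phi @^-1: A) = A.
Proof.
apply/setP => y; apply/imsetP/idP => [[x] | yA]; first by rewrite inE => ? ->.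
have /codomP [x yE] := inj_card_onto phi_inj card_le y.
by exists x; rewrite ?inE -?yE.
Qed.

Lemma sum_bounds_transfer : sum_bounds T -> sum_bounds G.
Proof.
have card_sums P (A : {set T}) : #|sized_subset_sums P (phi @: A)| = #|sized_subset_sums P A|.
  by rewrite sized_subset_sums_im card_imset.
have mem0_im (X : {set T}) : (0 \in phi @: X) = (0 \in X) by rewrite -phi0 mem_imset.
case=> [sb1 [sb2 [sb3 [sb4 sb5]]]]; split; [|split; [|split; [|split]]] => A;
  rewrite -[A]im_preim card_imset //.
- rewrite /zero_sum_free !subset_sumsE sized_subset_sums_im mem0_im card_imset //.
  by rewrite -!subset_sumsE; exact: sb1.
- by rewrite mem0_im subset_sumsE card_sums -subset_sumsE; exact: sb2.
- by rewrite mem0_im subset_sumsE card_sums -subset_sumsE; exact: sb3.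
- by rewrite subset_sums_rE card_sums; exact: sb4.
move=> B cardA; rewrite -[B]im_preim card_imset // sumset_im card_imset //; exact: sb5.
Qed.
End Transfer.

Definition subseqs_of_size (T : Type) (k : nat) (s : seq T) : seq (seq T) :=
  [seq t <- subseqs s | size t == k].

(* Finite sets and big operators do not reduce under [vm_compute], so the exhaustive
   check runs on duplicate-free sequences drawn from an explicit enumeration [e]. *)
Definition sum_bounds_check (T : finZmodType) (e : seq T) : bool :=
  let sums := sized_sums (fun n => 0 < n)%N in
  let ncard (s : seq T) := size (undup s) in
  [&& all (fun s : seq T => (0 \notin sums s) ==> (6 <= ncard (sums s))%N)
        (subseqs_of_size 3 e),
      all (fun s : seq T => (0 \notin s) ==> (5 <= ncard (sums s))%N)
        (subseqs_of_size 3 e),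
      all (fun s : seq T => (0 \notin s) ==> (7 <= ncard (sums s))%N)
        (subseqs_of_size 4 e),
      all (fun s : seq T => 5 <= ncard (sized_sums (pred1 2%N) s))%N
        (subseqs_of_size 4 e) &
      all (fun s : seq T =>
             all (fun t : seq T => 5 <= ncard [seq (a + b)%R | a <- s, b <- t])%N
               (subseqs_of_size 2 e))
        (subseqs_of_size 4 e)].

Section CheckSound.
Variables (T : finZmodType) (e : seq T).
Hypotheses (e_uniq : uniq e) (mem_e : forall x, x \in e).

Let set_filter (A : {set T}) : [set:: [seq x <- e | x \in A]] = A.
Proof. by apply/setP => x; rewrite inE mem_filter mem_e andbT. Qed.

Let filter_subseqs_of_size (A : {set T}) k :
  #|A| = k -> [seq x <- e | x \in A] \in subseqs_of_size k e.
Proof.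
move=> <-; rewrite mem_filter mem_subseqs ?filter_subseq // andbT.
by rewrite -{2}(set_filter A) card_set_seq undup_id ?filter_uniq.
Qed.

Lemma sum_bounds_check_sound : sum_bounds_check e -> sum_bounds T.
Proof.
case/and5P => c1 c2 c3 c4 c5; split; [|split; [|split; [|split]]] => A.
- move=> cardA; rewrite -(set_filter A) /zero_sum_free subset_sumsE.
  rewrite sized_subset_sums_seq ?filter_uniq // inE card_set_seq.
  exact/implyP/(allP c1)/filter_subseqs_of_size.
- move=> cardA; rewrite -(set_filter A) inE subset_sumsE.
  rewrite sized_subset_sums_seq ?filter_uniq // card_set_seq.
  exact/implyP/(allP c2)/filter_subseqs_of_size.
- move=> cardA; rewrite -(set_filter A) inE subset_sumsE.
  rewrite sized_subset_sums_seq ?filter_uniq // card_set_seq.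
  exact/implyP/(allP c3)/filter_subseqs_of_size.
- move=> cardA; rewrite -(set_filter A) subset_sums_rE.
  rewrite sized_subset_sums_seq ?filter_uniq // card_set_seq.
  exact/(allP c4)/filter_subseqs_of_size.
move=> B cardA /card_gt1P [b1 [b2 [b1B b2B b12]]].
have sub_B : [set b1; b2] \subset B by rewrite subUset !sub1set b1B b2B.
have : sumset A [set b1; b2] \subset sumset A B by apply: imset2S.
move/subset_leq_card; apply: leq_trans.
rewrite -(set_filter A) -(set_filter [set b1; b2]) sumset_seq card_set_seq.
apply/(allP (allP c5 _ (filter_subseqs_of_size cardA)))/filter_subseqs_of_size.
by rewrite cards2 b12.
Qed.
End CheckSound.

Lemma mulrn_modn (V : zmodType) (x : V) n m : x *+ n = 0 -> x *+ (m %% n) = x *+ m.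
Proof. by move=> xn; rewrite [in RHS](divn_eq m n) mulrnDr mulrnA mulrnAC xn mul0rn add0r. Qed.

Lemma mulrn_ord_morph (V : zmodType) n (x : V) : x *+ n.+1 = 0 ->
  {morph (fun k : 'I_n.+1 => x *+ k) : i j / i + j}.
Proof. by move=> xn i j /=; rewrite mulrn_modn // mulrnDr. Qed.

Lemma morphD_inj (U V : zmodType) (f : U -> V) : {morph f : x y / x + y} ->
  (forall x, f x = 0 -> x = 0) -> injective f.
Proof.
move=> fD f_ker x y fxy; apply/eqP; rewrite -subr_eq0; apply/eqP/f_ker.
by apply: (addIr (f y)); rewrite -fD subrK fxy add0r.
Qed.

Lemma mulrn_card (G : finZmodType) (x : G) : x *+ #|G| = 0.
Proof. by rewrite -zmodXgE -cardsT expg_cardG ?inE. Qed.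

Section Order9.
Variable G : finZmodType.
Hypothesis cardG : #|G| = 9%N.

Lemma cyclic_embedding (x : G) : x *+ 3 != 0 ->
  {morph (fun k : 'I_9 => x *+ k) : i j / i + j} /\ injective (fun k : 'I_9 => x *+ k).
Proof.
move=> x3; split; first by apply: mulrn_ord_morph; rewrite -cardG mulrn_card.
have ox : #[x]%g = 9%N.
  have : (#[x]%g %| 9)%N by rewrite -cardG -cardsT order_dvdG ?inE.
  rewrite -[9%N]/(3 ^ 2)%N => /dvdn_pfactor [// | m].
  move: x3; rewrite -zmodXgE -order_dvdn => x3.
  by case: m => [|[|[|m]]] //= _ ox; rewrite ox in x3.
move=> i j /eqP; rewrite -!zmodXgE eq_expg_mod_order ox !modn_small //.
by move=> /eqP /val_inj.
Qed.

Lemma exponent3_embedding : (forall y : G, y *+ 3 = 0) ->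
  exists phi : 'I_3 * 'I_3 -> G, {morph phi : u v / u + v} /\ injective phi.
Proof.
move=> G3.
have oppr_mulrn2 (y : G) : - y = y *+ 2.
  by apply/eqP; rewrite eq_sym -addr_eq0 -mulrSr G3.
have mulrn_sqr (y : G) (k : 'I_3) : (0 < k)%N -> y *+ (k * k) = y.
  by rewrite -(mulrn_modn _ (G3 y)); case: k => -[|[|[|]]].
have [g g0] : exists g : G, g != 0.
  have /card_gt1P [a [b [_ _ ab]]] : (1 < #|G|)%N by rewrite cardG.
  by case: (eqVneq a 0) => [a0 | ]; [exists b; rewrite -a0 eq_sym | exists a].
have /subsetPn [h _ gh] : ~~ ([set: G] \subset [set g *+ k | k : 'I_3]).
  apply: contraTN (leq_imset_card (fun k : 'I_3 => g *+ k) 'I_3) => /subset_leq_card.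
  by rewrite cardsT cardG card_ord -ltnNge; apply: leq_trans.
exists (fun u : 'I_3 * 'I_3 => g *+ u.1 + h *+ u.2); split.
  by case=> a b [c d] /=; rewrite !mulrn_modn ?G3 // !mulrnDr addrACA.
apply: morphD_inj => [[a b] [c d] | [a b] /= Eab].
  by rewrite /= !mulrn_modn ?G3 // !mulrnDr addrACA.
have b0 : b = 0.
  apply/val_inj/eqP; apply: contraR gh; rewrite -lt0n => b_gt0.
  (* Multiplying by [b] (and [b * b = 1 mod 3]) exhibits [h] as a multiple of [g]. *)
  have hb : h *+ b = g *+ a *+ 2 by rewrite -oppr_mulrn2; apply/eqP; rewrite -addr_eq0 addrC Eab.
  apply/imsetP; exists (inZp (a * 2 * b)) => //=.
  by rewrite mulrn_modn // !mulrnA -hb -mulrnA mulrn_sqr.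
have a0 : a = 0.
  apply/val_inj/eqP; apply: contraR g0; rewrite -lt0n => a_gt0.
  have ga : g *+ a = 0 by move: Eab; rewrite b0 /= mulr0n addr0.
  by rewrite -(mulrn_sqr g a a_gt0) mulrnA ga mul0rn.
by rewrite a0 b0.
Qed.

Lemma order9_embedding :
  (exists phi : 'I_9 -> G, {morph phi : u v / u + v} /\ injective phi) \/
  (exists phi : 'I_3 * 'I_3 -> G, {morph phi : u v / u + v} /\ injective phi).
Proof.
have [/existsP [x x3] | /existsPn G3] := boolP [exists x : G, x *+ 3 != 0].
  by left; exists (fun k => x *+ k); apply: cyclic_embedding.
by right; apply: exponent3_embedding => y; apply/eqP; rewrite -[_ == _]negbK G3.
Qed.
End Order9.

(* [enum 'I_n.+1] is blocked under [vm_compute] by the opaque proofs inside [insub]. *)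
Definition ord_elems n : seq 'I_n.+1 := [seq inZp i | i <- iota 0 n.+1].

Lemma ord_elems_uniq n : uniq (ord_elems n).
Proof.
rewrite map_inj_in_uniq ?iota_uniq // => i j; rewrite !mem_iota /= => lti ltj.
by move/(congr1 val) => /=; rewrite !modn_small.
Qed.

Lemma mem_ord_elems n (x : 'I_n.+1) : x \in ord_elems n.
Proof. by rewrite -(valZpK x) map_f // mem_iota ltn_ord. Qed.

Lemma sum_bounds_I9 : sum_bounds 'I_9.
Proof.
apply: (sum_bounds_check_sound (ord_elems_uniq 8) (@mem_ord_elems 8)).
by vm_compute.
Qed.

Lemma sum_bounds_I3xI3 : sum_bounds ('I_3 * 'I_3)%type.
Proof.
pose e := [seq (a, b) | a <- ord_elems 2, b <- ord_elems 2].
have e_uniq : uniq e.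
  by rewrite allpairs_uniq ?ord_elems_uniq // => -[? ?] [? ?] _ _ [-> ->].
have mem_e u : u \in e by case: u => a b; rewrite allpairs_f ?mem_ord_elems.
by apply: (sum_bounds_check_sound e_uniq mem_e); vm_compute.
Qed.

Theorem lemma2p5 (G : finZmodType) (hG : #|G| = 9%N) :
  (forall A : {set G}, #|A| = 3%N -> zero_sum_free A -> (6 <= #|subset_sums A|)%N) /\
  (forall A : {set G}, #|A| = 3%N -> 0 \notin A -> (5 <= #|subset_sums A|)%N) /\
  (forall A : {set G}, #|A| = 4%N -> 0 \notin A -> (7 <= #|subset_sums A|)%N) /\
  (forall A : {set G}, #|A| = 4%N -> (5 <= #|subset_sums_r 2 A|)%N) /\
  (forall A B : {set G}, #|A| = 4%N -> (2 <= #|B|)%N -> (5 <= #|sumset A B|)%N).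
Proof.
have [[phi [phiD phi_inj]] | [phi [phiD phi_inj]]] := order9_embedding hG.
  by apply: (sum_bounds_transfer phiD phi_inj _ sum_bounds_I9); rewrite hG card_ord.
apply: (sum_bounds_transfer phiD phi_inj _ sum_bounds_I3xI3).
by rewrite hG card_prod !card_ord.
Qed.
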